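(* Let ${\bf D}$ be an $L\times N$ complex matrix with $L=Rd$, $N=Md$, whose columns have unit Euclidean norm, partitioned into consecutive column-blocks ${\bf D}[1],\dots,{\bf D}[M]$ of size $L\times d$, and assume ${\bf D}{\bf g}\neq{\bf 0}$ for every nonzero block $2k$-sparse ${\bf g}\in\mathbb{C}^N$. Let $\mu_{\mathrm B}>0$ be the block-coherence and $\nu$ the sub-coherence of ${\bf D}$. If $$kd<\frac12\left(\mu_{\mathrm B}^{-1}+d-(d-1)\frac{\nu}{\mu_{\mathrm B}}\right),$$ then for every set $\Lambda_0$ of $k$ block indices, letting ${\bf D}_0$ be the $L\times(kd)$ matrix formed by the blocks ${\bf D}[\ell]$, $\ell\in\Lambda_0$, and $\overline{{\bf D}}_0$ the matrix formed by the remaining blocks, we have $\rho_c({\bf D}_0^\dagger\overline{{\bf D}}_0)<1$.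
   Context: $\rho(\cdot)$ is the spectral norm, ${\bf A}^\dagger$ the Moore–Penrose pseudo-inverse. Block-coherence: $\mu_{\mathrm B}=\max_{\ell, r\neq\ell}\frac1d\rho({\bf D}^H[\ell]{\bf D}[r])$. Sub-coherence: $\nu=\max_\ell\max_{i,j\neq i}|{\bf d}_i^H{\bf d}_j|$ with ${\bf d}_i,{\bf d}_j$ columns of the same block ${\bf D}[\ell]$ ($\nu=0$ if $d=1$). For a matrix ${\bf A}$ whose dimensions are multiples of $d$, with $(\ell,r)$th $d\times d$ block ${\bf A}[\ell,r]$, $\rho_c({\bf A})=\max_r\sum_\ell\rho({\bf A}[\ell,r])$. A vector in $\mathbb{C}^N$ is block $2k$-sparse if at most $2k$ of its consecutive length-$d$ blocks are nonzero. *)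

From HB Require Import structures.
From mathcomp Require Import all_boot all_order all_algebra.
From mathcomp Require Import all_classical reals.
From mathcomp.real_closed Require Import complex.
Set Implicit Arguments.
Unset Strict Implicit.
Unset Printing Implicit Defensive.
Import Order.TTheory GRing.Theory Num.Theory.
Local Open Scope ring_scope.

Section BlockDefs.
Variable R : realType.
Local Notation C := (R[i]).

Definition cnorm (z : C) : R := Normc.normc z.

Definition adjmx m n (A : 'M[C]_(m, n)) : 'M[C]_(n, m) :=
  \matrix_(i, j) conjc (A j i).

Definition vnorm n (x : 'cV[C]_n) : R :=
  Num.sqrt (\sum_i cnorm (x i ord0) ^+ 2).

Definition specnorm m n (A : 'M[C]_(m, n)) : R :=
  sup [set vnorm (A *m x) | x in [set x : 'cV[C]_n | vnorm x <= 1]]%classic.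

Definition penrose m n (A : 'M[C]_(m, n)) (X : 'M[C]_(n, m)) : Prop :=
  [/\ A *m X *m A = A, X *m A *m X = X,
      adjmx (A *m X) = A *m X & adjmx (X *m A) = X *m A].

Definition mp_pinv m n (A : 'M[C]_(m, n)) : 'M[C]_(n, m) :=
  xget 0 [set X | penrose A X]%classic.

Definition mblock d p q (A : 'M[C]_(p * d, q * d)) (l : 'I_p) (r : 'I_q)
  : 'M[C]_d := \matrix_(i, j) A (mxvec_index l i) (mxvec_index r j).

Definition rho_c d p q (A : 'M[C]_(p * d, q * d)) : R :=
  \big[Num.max/0]_(r < q) \sum_(l < p) specnorm (mblock A l r).

Definition colblock L d M (D : 'M[C]_(L, M * d)) (l : 'I_M) : 'M[C]_(L, d) :=
  \matrix_(i, j) D i (mxvec_index l j).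

Definition block_coherence L d M (D : 'M[C]_(L, M * d)) : R :=
  \big[Num.max/0]_(l < M) \big[Num.max/0]_(r < M | r != l)
     (specnorm (adjmx (colblock D l) *m colblock D r) / d%:R).

Definition sub_coherence L d M (D : 'M[C]_(L, M * d)) : R :=
  \big[Num.max/0]_(l < M) \big[Num.max/0]_(i < d) \big[Num.max/0]_(j < d | j != i)
     cnorm (\sum_t conjc (D t (mxvec_index l i)) * D t (mxvec_index l j)).

Definition blk_support d M (g : 'cV[C]_(M * d)) : {set 'I_M} :=
  [set l | [exists j : 'I_d, g (mxvec_index l j) ord0 != 0]].

End BlockDefs.

Lemma blockof_proof m d (c : 'I_(m * d)) : (c %/ d < m)%N.
Proof.
case: d c => [|d] c; first by case: c => c; rewrite muln0.
by rewrite ltn_divLR.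
Qed.

Lemma inblock_proof m d (c : 'I_(m * d)) : (c %% d < d)%N.
Proof.
case: d c => [|d] c; first by case: c => c; rewrite muln0.
by rewrite ltn_pmod.
Qed.

Definition blockof m d (c : 'I_(m * d)) : 'I_m := Ordinal (blockof_proof c).
Definition inblock m d (c : 'I_(m * d)) : 'I_d := Ordinal (inblock_proof c).

(* column indices of the blocks in S, blocks taken in increasing order *)
Definition selcols M d (S : {set 'I_M}) (c : 'I_(#|S| * d)) : 'I_(M * d) :=
  mxvec_index (enum_val (blockof c)) (inblock c).

Definition subblocks (R : realType) L M d (D : 'M[R[i]]_(L, M * d))
  (S : {set 'I_M}) : 'M[R[i]]_(L, #|S| * d) :=
  colsub (@selcols M d S) D.

From HB Require Import structures.
From mathcomp Require Import all_boot all_order all_algebra.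
From mathcomp Require Import all_classical reals.
From mathcomp.real_closed Require Import complex.
From mathcomp Require Import ring lra.
Set Implicit Arguments.
Unset Strict Implicit.
Unset Printing Implicit Defensive.
Import Order.TTheory GRing.Theory Num.Theory.
Local Open Scope complex_scope.
Local Open Scope ring_scope.

(* Let P = D_0^H D_0 be the Gram matrix of the selected blocks and measure
   everything with rho_c, which is subadditive and submultiplicative on block
   matrices.  The diagonal blocks of P - I have zero diagonal and entries of modulus
   at most nu, so by Schur's test their spectral norm is at most (d-1) nu; the
   off-diagonal blocks of P and all blocks of D_0^H Dbar_0 have spectral norm at most
   d mu_B.  Hence rho_c(P - I) <= (d-1) nu + (k-1) d mu_B and
   rho_c(D_0^H Dbar_0) <= k d mu_B, and the hypothesis on k d says exactly that
   these two bounds add up to less than 1.  A Neumann-series argument then makes P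
   invertible with rho_c(P^-1) (1 - rho_c(P - I)) <= 1, and since
   D_0^dagger = P^-1 D_0^H we get
   rho_c(D_0^dagger Dbar_0) <= rho_c(D_0^H Dbar_0) / (1 - rho_c(P - I)) < 1. *)

Section RealSums.
Variable R : rcfType.

Lemma CauchySchwarz_sum n (u v : 'I_n -> R) :
  (\sum_i u i * v i) ^+ 2 <= (\sum_i u i ^+ 2) * (\sum_i v i ^+ 2).
Proof.
have sum_mul (a b : 'I_n -> R) :
    \sum_i \sum_j a i * b j = (\sum_i a i) * (\sum_i b i).
  by rewrite mulr_suml; apply: eq_bigr => i _; rewrite mulr_sumr.
have lagrange : \sum_i \sum_j (u i * v j - u j * v i) ^+ 2 =
    2%:R * ((\sum_i u i ^+ 2) * (\sum_i v i ^+ 2) - (\sum_i u i * v i) ^+ 2).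
  have -> : \sum_i \sum_j (u i * v j - u j * v i) ^+ 2 =
      \sum_i \sum_j (u i ^+ 2 * v j ^+ 2) + \sum_i \sum_j (u j ^+ 2 * v i ^+ 2)
      - 2%:R * \sum_i \sum_j (u i * v i) * (u j * v j).
    rewrite mulr_sumr -big_split -sumrB /=; apply: eq_bigr => i _.
    by rewrite mulr_sumr -big_split -sumrB /=; apply: eq_bigr => j _; ring.
  by rewrite [X in _ + X - _]exchange_big /= !sum_mul expr2; ring.
have : 0 <= \sum_i \sum_j (u i * v j - u j * v i) ^+ 2.
  by apply: sumr_ge0 => i _; apply: sumr_ge0 => j _; apply: sqr_ge0.
by rewrite lagrange pmulr_rge0 ?ltr0n // subr_ge0.
Qed.

Lemma le_of_sqr_le (a b : R) : 0 <= b -> a ^+ 2 <= b ^+ 2 -> a <= b.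
Proof. by move=> b_ge0 ab; nra. Qed.

Lemma CauchySchwarz_sum_sqrt n (u v : 'I_n -> R) :
  \sum_i u i * v i <= Num.sqrt (\sum_i u i ^+ 2) * Num.sqrt (\sum_i v i ^+ 2).
Proof.
apply: le_of_sqr_le; first by rewrite mulr_ge0 ?sqrtr_ge0.
rewrite exprMn !sqr_sqrtr ?CauchySchwarz_sum //;
  by apply: sumr_ge0 => i _; apply: sqr_ge0.
Qed.

Lemma CauchySchwarz_weighted n (w y : 'I_n -> R) : (forall i, 0 <= w i) ->
  (\sum_i w i * y i) ^+ 2 <= (\sum_i w i) * (\sum_i w i * y i ^+ 2).
Proof.
move=> w_ge0; have := CauchySchwarz_sum (fun i => Num.sqrt (w i))
  (fun i => Num.sqrt (w i) * y i).
have sqrtwK i : Num.sqrt (w i) ^+ 2 = w i by rewrite sqr_sqrtr.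
under eq_bigr => i _ do rewrite mulrA -expr2 sqrtwK.
under [\sum_i Num.sqrt _ ^+ 2]eq_bigr => i _ do rewrite sqrtwK.
by under [\sum_i (_ * _) ^+ 2]eq_bigr => i _ do rewrite exprMn sqrtwK.
Qed.

Lemma sum_if_eq n (r : 'I_n) (a b : R) :
  \sum_l (if l == r then a else b) = a + (n%:R - 1) * b.
Proof.
rewrite (bigD1 r) //= eqxx; congr (_ + _).
rewrite (eq_bigr (fun _ => b)) => [|l /negbTE -> //].
apply: (@addrI _ b); rewrite -(bigD1 r (P := xpredT)) //= sumr_const card_ord.
by rewrite -mulr_natl; ring.
Qed.

End RealSums.

Section VectorNorm.
Variable R : realType.
Local Notation C := (R[i]).

Lemma cnorm_ge0 (z : C) : 0 <= cnorm z.
Proof. by case: z => a b; apply: sqrtr_ge0. Qed.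

Lemma cnormM (a b : C) : cnorm (a * b) = cnorm a * cnorm b.
Proof. exact: Normc.normcM. Qed.

Lemma cnormN (a : C) : cnorm (- a) = cnorm a.
Proof. exact: normcN. Qed.

Lemma cnorm0 : cnorm (0 : C) = 0.
Proof. exact: Normc.normc0. Qed.

Lemma cnorm_eq0 (a : C) : cnorm a = 0 -> a = 0.
Proof. exact: Normc.eq0_normc. Qed.

Lemma cnorm_real (k : R) : cnorm k%:C = `|k|.
Proof. by rewrite /cnorm /= expr0n /= addr0 sqrtr_sqr. Qed.

Lemma cnorm_sum I (r : seq I) (P : pred I) (F : I -> C) :
  cnorm (\sum_(i <- r | P i) F i) <= \sum_(i <- r | P i) cnorm (F i).
Proof.
elim/big_rec2: _ => [|i y1 y2 _ IH]; first by rewrite cnorm0.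
by apply: le_trans (le_normcD _ _) _; rewrite lerD2l.
Qed.

Lemma conjc_mul_self (a : C) : conjc a * a = (cnorm a ^+ 2)%:C.
Proof.
case: a => x y; rewrite /cnorm /= sqr_sqrtr ?addr_ge0 ?sqr_ge0 //.
by apply/eqP; rewrite eq_complex /=; apply/andP; split; apply/eqP; ring.
Qed.

Lemma vnorm_ge0 n (x : 'cV[C]_n) : 0 <= vnorm x.
Proof. exact: sqrtr_ge0. Qed.

Lemma sqr_vnorm n (x : 'cV[C]_n) : vnorm x ^+ 2 = \sum_i cnorm (x i 0) ^+ 2.
Proof. by rewrite sqr_sqrtr // sumr_ge0 // => i _; rewrite sqr_ge0. Qed.

Lemma vnorm_le_sqr n (x : 'cV[C]_n) (c : R) : 0 <= c ->
  \sum_i cnorm (x i 0) ^+ 2 <= c ^+ 2 -> vnorm x <= c.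
Proof. by move=> c_ge0 le_xc; apply: le_of_sqr_le; rewrite ?sqr_vnorm. Qed.

Lemma vnorm0 n : vnorm (0 : 'cV[C]_n) = 0.
Proof. by rewrite /vnorm big1 ?sqrtr0 // => i _; rewrite mxE cnorm0 expr0n. Qed.

Lemma vnorm_eq0 n (x : 'cV[C]_n) : vnorm x = 0 -> x = 0.
Proof.
move=> x0; have : \sum_i cnorm (x i 0) ^+ 2 = 0 by rewrite -sqr_vnorm x0 expr0n.
move/psumr_eq0P => xi0; apply/matrixP => i j; rewrite ord1 mxE.
by apply: cnorm_eq0; apply/eqP; rewrite -sqrf_eq0 xi0 // => k _; apply: sqr_ge0.
Qed.

Lemma vnormN n (x : 'cV[C]_n) : vnorm (- x) = vnorm x.
Proof. by congr Num.sqrt; apply: eq_bigr => i _; rewrite mxE cnormN. Qed.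

Lemma vnormZ n (x : 'cV[C]_n) (k : R) : vnorm (k%:C *: x) = `|k| * vnorm x.
Proof.
rewrite /vnorm -sqrtr_sqr -sqrtrM ?sqr_ge0 //; congr Num.sqrt.
rewrite mulr_sumr; apply: eq_bigr => i _.
by rewrite mxE cnormM cnorm_real exprMn real_normK ?num_real.
Qed.

Lemma vnormD n (x y : 'cV[C]_n) : vnorm (x + y) <= vnorm x + vnorm y.
Proof.
apply: vnorm_le_sqr; first by rewrite addr_ge0 ?vnorm_ge0.
apply: le_trans (_ : \sum_i (cnorm (x i 0) + cnorm (y i 0)) ^+ 2 <= _).
  apply: ler_sum => i _; rewrite mxE lerXn2r ?nnegrE ?addr_ge0 ?cnorm_ge0 //.
  exact: le_normcD.
have cs := CauchySchwarz_sum_sqrt (fun i => cnorm (x i 0)) (fun i => cnorm (y i 0)).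
rewrite -/(vnorm x) -/(vnorm y) in cs.
have -> : \sum_i (cnorm (x i 0) + cnorm (y i 0)) ^+ 2 = vnorm x ^+ 2 + vnorm y ^+ 2
    + 2%:R * \sum_i cnorm (x i 0) * cnorm (y i 0).
  by rewrite !sqr_vnorm mulr_sumr -!big_split /=; apply: eq_bigr => i _; ring.
nra.
Qed.

Lemma vnorm_mulmx_Schur m n (A : 'M[C]_(m, n)) (c : R) x : 0 <= c ->
  (forall i, \sum_j cnorm (A i j) <= c) -> (forall j, \sum_i cnorm (A i j) <= c) ->
  vnorm (A *m x) <= c * vnorm x.
Proof.
move=> c_ge0 rows cols; apply: vnorm_le_sqr; first by rewrite mulr_ge0 ?vnorm_ge0.
have row_le i : cnorm ((A *m x) i 0) ^+ 2 <=
    c * \sum_j cnorm (A i j) * cnorm (x j 0) ^+ 2.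
  have s_ge0 : 0 <= \sum_j cnorm (A i j) * cnorm (x j 0).
    by apply: sumr_ge0 => j _; rewrite mulr_ge0 ?cnorm_ge0.
  apply: le_trans (_ : (\sum_j cnorm (A i j) * cnorm (x j 0)) ^+ 2 <= _).
    rewrite mxE lerXn2r ?nnegrE ?cnorm_ge0 //.
    by apply: le_trans (cnorm_sum _ _ _) _; under eq_bigr do rewrite cnormM.
  apply: le_trans (CauchySchwarz_weighted (fun j => cnorm (x j 0))
    (fun j => cnorm_ge0 (A i j))) _.
  by rewrite ler_wpM2r ?rows // sumr_ge0 // => j _; rewrite mulr_ge0 ?sqr_ge0 ?cnorm_ge0.
apply: le_trans (ler_sum _ (fun i _ => row_le i)) _.
rewrite -mulr_sumr exchange_big /= exprMn sqr_vnorm expr2 -mulrA ler_wpM2l //.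
rewrite mulr_sumr; apply: ler_sum => j _; rewrite -mulr_suml ler_wpM2r ?cols //.
exact: sqr_ge0.
Qed.

End VectorNorm.

Section SpectralNorm.
Variable R : realType.
Local Notation C := (R[i]).

Lemma specnorm_has_sup m n (A : 'M[C]_(m, n)) :
  has_sup [set vnorm (A *m x) | x in [set x : 'cV[C]_n | vnorm x <= 1]]%classic.
Proof.
split; first by exists (vnorm (A *m 0)), 0; rewrite //= vnorm0 ler01.
pose c := \sum_i \sum_j cnorm (A i j).
have c_ge0 : 0 <= c by do 2![apply: sumr_ge0 => ? _]; apply: cnorm_ge0.
have row_le i : \sum_j cnorm (A i j) <= c.
  rewrite /c (bigD1 i) //= lerDl.
  by do 2![apply: sumr_ge0 => ? _]; apply: cnorm_ge0.
have col_le j : \sum_i cnorm (A i j) <= c.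
  apply: ler_sum => i _; rewrite (bigD1 j) //= lerDl.
  by apply: sumr_ge0 => ? _; apply: cnorm_ge0.
exists c => _ [x /= x_le1 <-].
apply: le_trans (vnorm_mulmx_Schur x c_ge0 row_le col_le) _.
by rewrite ler_piMr.
Qed.

Lemma specnorm_ub m n (A : 'M[C]_(m, n)) x :
  vnorm x <= 1 -> vnorm (A *m x) <= specnorm A.
Proof. by move=> x_le1; apply: (sup_upper_bound (specnorm_has_sup A)); exists x. Qed.

Lemma specnorm_le m n (A : 'M[C]_(m, n)) c :
  (forall x, vnorm x <= 1 -> vnorm (A *m x) <= c) -> specnorm A <= c.
Proof.
move=> Ax_le; apply: ge_sup; first exact: (specnorm_has_sup A).1.
by move=> _ [x /= x_le1 <-]; apply: Ax_le.
Qed.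

Lemma specnorm_ge0 m n (A : 'M[C]_(m, n)) : 0 <= specnorm A.
Proof.
by have := @specnorm_ub _ _ A 0; rewrite mulmx0 !vnorm0; apply; rewrite ler01.
Qed.

Lemma vnorm_mulmx_le m n (A : 'M[C]_(m, n)) x :
  vnorm (A *m x) <= specnorm A * vnorm x.
Proof.
have [x0|x_neq0] := eqVneq (vnorm x) 0.
  by rewrite x0 mulr0 (vnorm_eq0 x0) mulmx0 vnorm0.
have x_gt0 : 0 < vnorm x by rewrite lt_def x_neq0 vnorm_ge0.
have := @specnorm_ub _ _ A ((vnorm x)^-1%:C *: x).
rewrite -scalemxAr !vnormZ ger0_norm ?invr_ge0 ?vnorm_ge0 // mulVf //.
by rewrite ler_pdivrMl // mulrC; apply.
Qed.

Lemma specnorm_Schur m n (A : 'M[C]_(m, n)) (c : R) : 0 <= c ->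
  (forall i, \sum_j cnorm (A i j) <= c) -> (forall j, \sum_i cnorm (A i j) <= c) ->
  specnorm A <= c.
Proof.
move=> c_ge0 rows cols; apply: specnorm_le => x x_le1.
apply: le_trans (vnorm_mulmx_Schur x c_ge0 rows cols) _.
by rewrite ler_piMr.
Qed.

Lemma specnormD m n (A B : 'M[C]_(m, n)) :
  specnorm (A + B) <= specnorm A + specnorm B.
Proof.
apply: specnorm_le => x x_le1; rewrite mulmxDl.
by apply: le_trans (vnormD _ _) _; rewrite lerD ?specnorm_ub.
Qed.

Lemma specnormN m n (A : 'M[C]_(m, n)) : specnorm (- A) <= specnorm A.
Proof. by apply: specnorm_le => x x_le1; rewrite mulNmx vnormN specnorm_ub. Qed.

Lemma specnormM m n p (A : 'M[C]_(m, n)) (B : 'M[C]_(n, p)) :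
  specnorm (A *m B) <= specnorm A * specnorm B.
Proof.
apply: specnorm_le => x x_le1; rewrite -mulmxA.
apply: le_trans (vnorm_mulmx_le _ _) _.
by rewrite ler_wpM2l ?specnorm_ge0 ?specnorm_ub.
Qed.

Lemma specnorm_sum I (r : seq I) (P : pred I) m n (F : I -> 'M[C]_(m, n)) :
  specnorm (\sum_(i <- r | P i) F i) <= \sum_(i <- r | P i) specnorm (F i).
Proof.
elim/big_rec2: _ => [|i y1 y2 _ IH].
  by apply: specnorm_le => x _; rewrite mul0mx vnorm0.
by apply: le_trans (specnormD _ _) _; rewrite lerD2l.
Qed.

Lemma specnorm1 n : specnorm (1%:M : 'M[C]_n) <= 1.
Proof. by apply: specnorm_le => x x_le1; rewrite mul1mx. Qed.

Lemma specnorm0 m n : specnorm (0 : 'M[C]_(m, n)) = 0.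
Proof.
apply/eqP; rewrite eq_le specnorm_ge0 andbT.
by apply: specnorm_le => x _; rewrite mul0mx vnorm0.
Qed.

Lemma specnorm_eq0 m n (A : 'M[C]_(m, n)) : specnorm A <= 0 -> A = 0.
Proof.
move=> A_le0; apply/matrixP => i j; rewrite mxE.
have Aej_le0 : vnorm (A *m delta_mx j 0) <= 0.
  by apply: le_trans (vnorm_mulmx_le _ _) _; rewrite mulr_le0_ge0 ?vnorm_ge0.
have /vnorm_eq0 : vnorm (A *m delta_mx j 0) = 0.
  by apply/eqP; rewrite eq_le Aej_le0 vnorm_ge0.
by rewrite -colE => /matrixP /(_ i 0); rewrite !mxE.
Qed.

Lemma specnorm_zero_diag n (E : 'M[C]_n) (nu : R) : (0 < n)%N -> 0 <= nu ->
  (forall i, E i i = 0) -> (forall i j, i != j -> cnorm (E i j) <= nu) ->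
  specnorm E <= (n%:R - 1) * nu.
Proof.
move=> n_gt0 nu_ge0 E_diag E_offdiag.
have offdiag_le i j : cnorm (E i j) <= if i == j then 0 else nu.
  by case: eqVneq => [->|/E_offdiag //]; rewrite E_diag cnorm0.
apply: specnorm_Schur => [|i|j]; first by rewrite mulr_ge0 // subr_ge0 ler1n.
  rewrite -[_ * nu]add0r -(sum_if_eq i); apply: ler_sum => j _.
  by rewrite eq_sym offdiag_le.
by rewrite -[_ * nu]add0r -(sum_if_eq j); apply: ler_sum => i _; apply: offdiag_le.
Qed.

End SpectralNorm.

Lemma nth_allpairs_pair (A B : Type) (s : seq A) (t : seq B) x0 i j :
  (i < size s)%N -> (j < size t)%N ->
  nth x0 [seq (x, y) | x <- s, y <- t] (i * size t + j) =
  (nth x0.1 s i, nth x0.2 t j).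
Proof.
elim: s i => [|a s IH] [|i] // i_lt j_lt; rewrite allpairs_cons nth_cat size_map.
  by rewrite mul0n add0n j_lt (nth_map x0.2).
by rewrite mulSn -addnA ltnNge leq_addr /= addKn IH.
Qed.

Lemma mxvec_indexE m n (i : 'I_m) (j : 'I_n) :
  nat_of_ord (mxvec_index i j) = (i * n + j)%N.
Proof.
set s := enum {: 'I_m * 'I_n}; have s_uniq : uniq s by apply: enum_uniq.
have ij_lt : (i * n + j < size s)%N.
  rewrite -cardE card_prod !card_ord.
  apply: leq_trans (_ : i * n + n <= _)%N; first by rewrite ltn_add2l.
  by rewrite -mulSnr leq_mul2r ltn_ord orbT.
(* [enum] of a product of finite types is row-major. *)
have nth_ij : nth (i, j) s (i * n + j) = (i, j).
  rewrite /s enumT unlock -[in X in (_ * X)%N](size_enum_ord n).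
  rewrite nth_allpairs_pair ?size_enum_ord //.
  by congr pair; apply: val_inj; rewrite /= nth_enum_ord.
rewrite -[RHS](index_uniq (i, j) ij_lt s_uniq) nth_ij.
by rewrite -[in RHS](nth_enum_rank (i, j) (i, j)) index_uniq // -cardE.
Qed.

Lemma mxvec_index_div m n (i : 'I_m) (j : 'I_n) : (mxvec_index i j %/ n)%N = i.
Proof.
rewrite mxvec_indexE divnMDl; last by apply: leq_ltn_trans (ltn_ord j).
by rewrite divn_small ?addn0.
Qed.

Lemma mxvec_index_mod m n (i : 'I_m) (j : 'I_n) : (mxvec_index i j %% n)%N = j.
Proof. by rewrite mxvec_indexE modnMDl modn_small. Qed.

Lemma eq_mxvec_index m n (a b : 'I_m) (i j : 'I_n) :
  (mxvec_index a i == mxvec_index b j) = (a == b) && (i == j).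
Proof.
apply/eqP/andP => [eq_ab|[/eqP -> /eqP -> //]].
split; apply/eqP/val_inj.
  by rewrite /= -(mxvec_index_div a i) -(mxvec_index_div b j) eq_ab.
by rewrite /= -(mxvec_index_mod a i) -(mxvec_index_mod b j) eq_ab.
Qed.

Lemma sum_mxvec_index (V : nmodType) m n (F : 'I_(m * n) -> V) :
  \sum_k F k = \sum_(i < m) \sum_(j < n) F (mxvec_index i j).
Proof.
rewrite pair_big (reindex (uncurry (@mxvec_index m n))); last exact: curry_mxvec_bij.
by apply: eq_bigr => -[i j].
Qed.

Section Blocks.
Variable R : realType.
Local Notation C := (R[i]).

Lemma mblockD d p q (A B : 'M[C]_(p * d, q * d)) l r :
  mblock (A + B) l r = mblock A l r + mblock B l r.
Proof. by apply/matrixP => i j; rewrite !mxE. Qed.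

Lemma mblockN d p q (A : 'M[C]_(p * d, q * d)) l r :
  mblock (- A) l r = - mblock A l r.
Proof. by apply/matrixP => i j; rewrite !mxE. Qed.

Lemma mblock1 d q (l r : 'I_q) :
  mblock (1%:M : 'M[C]_(q * d)) l r = if l == r then 1%:M else 0.
Proof.
by apply/matrixP => i j; rewrite !mxE eq_mxvec_index; case: (l == r); rewrite ?mxE.
Qed.

Lemma mblockM d p q s (A : 'M[C]_(p * d, q * d)) (B : 'M[C]_(q * d, s * d)) l r :
  mblock (A *m B) l r = \sum_t mblock A l t *m mblock B t r.
Proof.
apply/matrixP => i j; rewrite !mxE summxE sum_mxvec_index.
by apply: eq_bigr => t _; rewrite !mxE; apply: eq_bigr => k _; rewrite !mxE.
Qed.

Lemma mblock_adjmx_mul L d p q (X : 'M[C]_(L, p * d)) (Y : 'M[C]_(L, q * d)) l r :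
  mblock (adjmx X *m Y) l r = adjmx (colblock X l) *m colblock Y r.
Proof. by apply/matrixP => i j; rewrite !mxE; apply: eq_bigr => t _; rewrite !mxE. Qed.

Lemma colblock_subblocks L M d (D : 'M[C]_(L, M * d)) (S : {set 'I_M}) l :
  colblock (subblocks D S) l = colblock D (enum_val l).
Proof.
apply/matrixP => i j; rewrite !mxE /selcols; congr (D i (mxvec_index _ _)).
  by congr enum_val; apply: val_inj; rewrite /= mxvec_index_div.
by apply: val_inj; rewrite /= mxvec_index_mod.
Qed.

Lemma rho_c_ge0 d p q (A : 'M[C]_(p * d, q * d)) : 0 <= rho_c A.
Proof. exact: bigmax_ge_id. Qed.

Lemma sum_specnorm_mblock_le d p q (A : 'M[C]_(p * d, q * d)) r :
  \sum_l specnorm (mblock A l r) <= rho_c A.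
Proof. exact: (le_bigmax _ (fun r => \sum_l specnorm (mblock A l r))). Qed.

Lemma rho_c_le d p q (A : 'M[C]_(p * d, q * d)) c : 0 <= c ->
  (forall r, \sum_l specnorm (mblock A l r) <= c) -> rho_c A <= c.
Proof. by move=> c_ge0 cols; apply: bigmax_le. Qed.

Lemma rho_c0 d p q : rho_c (0 : 'M[C]_(p * d, q * d)) = 0.
Proof.
apply/eqP; rewrite eq_le rho_c_ge0 andbT; apply: rho_c_le => // r.
rewrite big1 // => l _; rewrite -(specnorm0 R d d); congr specnorm.
by apply/matrixP => i j; rewrite !mxE.
Qed.

Lemma rho_c_empty d p q (A : 'M[C]_(p * d, q * d)) : p = 0%N -> rho_c A = 0.
Proof.
move=> p0; apply/eqP; rewrite eq_le rho_c_ge0 andbT.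
apply: rho_c_le => // r; rewrite big1 // => l _; exfalso.
by have := ltn_ord l; move: (nat_of_ord l) => l'; rewrite p0.
Qed.

Lemma rho_cD d p q (A B : 'M[C]_(p * d, q * d)) :
  rho_c (A + B) <= rho_c A + rho_c B.
Proof.
apply: rho_c_le => [|r]; first by rewrite addr_ge0 ?rho_c_ge0.
apply: le_trans (_ : \sum_l (specnorm (mblock A l r) + specnorm (mblock B l r)) <= _).
  by apply: ler_sum => l _; rewrite mblockD specnormD.
by rewrite big_split lerD ?sum_specnorm_mblock_le.
Qed.

Lemma rho_cN d p q (A : 'M[C]_(p * d, q * d)) : rho_c (- A) <= rho_c A.
Proof.
apply: rho_c_le => [|r]; first exact: rho_c_ge0.
apply: le_trans (sum_specnorm_mblock_le A r).
by apply: ler_sum => l _; rewrite mblockN specnormN.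
Qed.

Lemma rho_c1 d q : rho_c (1%:M : 'M[C]_(q * d)) <= 1.
Proof.
apply: rho_c_le => [|r]; first exact: ler01.
rewrite (bigD1 r) //= mblock1 eqxx big1 ?addr0 ?specnorm1 // => l l_neq_r.
by rewrite mblock1 (negbTE l_neq_r) specnorm0.
Qed.

Lemma rho_cM d p q s (A : 'M[C]_(p * d, q * d)) (B : 'M[C]_(q * d, s * d)) :
  rho_c (A *m B) <= rho_c A * rho_c B.
Proof.
apply: rho_c_le => [|r]; first by rewrite mulr_ge0 ?rho_c_ge0.
apply: le_trans
  (_ : \sum_l \sum_t specnorm (mblock A l t) * specnorm (mblock B t r) <= _).
  apply: ler_sum => l _; rewrite mblockM; apply: le_trans (specnorm_sum _ _ _) _.
  by apply: ler_sum => t _; apply: specnormM.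
rewrite exchange_big /=.
apply: le_trans (_ : \sum_t rho_c A * specnorm (mblock B t r) <= _).
  apply: ler_sum => t _; rewrite -mulr_suml ler_wpM2r ?specnorm_ge0 //.
  exact: sum_specnorm_mblock_le.
by rewrite -mulr_sumr ler_wpM2l ?rho_c_ge0 ?sum_specnorm_mblock_le.
Qed.

Lemma rho_c_eq0 d p q (A : 'M[C]_(p * d, q * d)) : rho_c A <= 0 -> A = 0.
Proof.
move=> A_le0; apply/matrixP => i j; rewrite mxE.
case/mxvec_indexP: i => l a; case/mxvec_indexP: j => r b.
have : specnorm (mblock A l r) <= 0.
  apply: le_trans A_le0; apply: le_trans (sum_specnorm_mblock_le A r).
  by rewrite (bigD1 l) //= lerDl sumr_ge0 // => t _; apply: specnorm_ge0.
by move/specnorm_eq0/matrixP/(_ a b); rewrite !mxE.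
Qed.

End Blocks.

Section Neumann.
Variable R : realType.
Local Notation C := (R[i]).
Variables (d q : nat) (P : 'M[C]_(q * d)).
Hypothesis P_near1 : rho_c (P - 1%:M) < 1.

Lemma rho_c_mulmx_ge p (X : 'M[C]_(p * d, q * d)) :
  rho_c X * (1 - rho_c (P - 1%:M)) <= rho_c (X *m P).
Proof.
have splitX : X = X *m P + - (X *m (P - 1%:M)).
  by rewrite mulmxBr mulmx1 opprB addrC subrK.
have : rho_c X <= rho_c (X *m P) + rho_c X * rho_c (P - 1%:M).
  rewrite {1}splitX; apply: le_trans (rho_cD _ _) _; rewrite lerD2l.
  exact: le_trans (rho_cN _) (rho_cM _ _).
by rewrite mulrBr mulr1 lerBlDr.
Qed.

Lemma rho_c_near1_unitmx : P \in unitmx.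
Proof.
rewrite unitmxE unitfE; apply/negP => /det0P [v v_neq0 vP].
pose V : 'M[C]_(q * d) := \matrix_(i < q * d) v.
have VP : V *m P = 0 by apply/row_matrixP => i; rewrite row_mul rowK vP row0.
have : rho_c V * (1 - rho_c (P - 1%:M)) <= 0.
  by rewrite -(rho_c0 R d q q) -VP rho_c_mulmx_ge.
rewrite pmulr_lle0 ?subr_gt0 // => /rho_c_eq0 V0.
by move/eqP: v_neq0; apply; apply/rowP => j; move/matrixP: V0 => /(_ j j); rewrite !mxE.
Qed.

Lemma rho_c_invmx_le : rho_c (invmx P) * (1 - rho_c (P - 1%:M)) <= 1.
Proof.
apply: le_trans (rho_c_mulmx_ge _) _.
by rewrite mulVmx ?rho_c1 ?rho_c_near1_unitmx.
Qed.

End Neumann.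

Section PseudoInverse.
Variable R : realType.
Local Notation C := (R[i]).

Lemma adjmxE m n (A : 'M[C]_(m, n)) : adjmx A = map_mx conjc A^T.
Proof. by apply/matrixP => i j; rewrite !mxE. Qed.

Lemma adjmxM m n p (X : 'M[C]_(m, n)) (Y : 'M[C]_(n, p)) :
  adjmx (X *m Y) = adjmx Y *m adjmx X.
Proof. by rewrite !adjmxE trmx_mul map_mxM. Qed.

Lemma adjmxK m n (X : 'M[C]_(m, n)) : adjmx (adjmx X) = X.
Proof. by apply/matrixP => i j; rewrite !mxE conjcK. Qed.

Lemma adjmx1 n : adjmx (1%:M : 'M[C]_n) = 1%:M.
Proof. by rewrite adjmxE trmx1 map_mx1. Qed.

Lemma adjmx_invmx n (P : 'M[C]_n) : adjmx (invmx P) = invmx (adjmx P).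
Proof. by rewrite !adjmxE trmx_inv map_invmx. Qed.

Lemma mp_pinv_eq m n (A : 'M[C]_(m, n)) (G : 'M[C]_(n, m)) :
  G *m A = 1%:M -> adjmx (A *m G) = A *m G -> mp_pinv A = G.
Proof.
move=> GA AG_herm; apply: xget_unique.
  by split; [rewrite -mulmxA GA mulmx1 | rewrite GA mul1mx | | rewrite GA adjmx1].
move=> X [AXA XAX AX_herm XA_herm].
have XA : X *m A = 1%:M.
  have : G *m (A *m X *m A - A) = 0 by rewrite AXA subrr mulmx0.
  by rewrite mulmxBr !mulmxA GA !mul1mx => /eqP; rewrite subr_eq0 => /eqP.
have AX : A *m X = A *m G.
  rewrite -AG_herm -[in RHS]AXA -mulmxA adjmxM AX_herm AG_herm.
  by rewrite -!mulmxA [G *m (A *m X)]mulmxA GA mul1mx.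
by rewrite -XAX -mulmxA AX mulmxA XA mul1mx.
Qed.

Lemma mp_pinv_gram m n (A : 'M[C]_(m, n)) : adjmx A *m A \in unitmx ->
  mp_pinv A = invmx (adjmx A *m A) *m adjmx A.
Proof.
move=> P_unit; apply: mp_pinv_eq; first by rewrite -mulmxA mulVmx.
have P_herm : adjmx (adjmx A *m A) = adjmx A *m A by rewrite adjmxM adjmxK.
by rewrite !adjmxM adjmxK adjmx_invmx P_herm mulmxA.
Qed.

End PseudoInverse.

Lemma rho_c_pinv_mul_lt1 (R : realType) L d p q
    (A : 'M[R[i]]_(L, p * d)) (B : 'M[R[i]]_(L, q * d)) :
  rho_c (adjmx A *m A - 1%:M) + rho_c (adjmx A *m B) < 1 ->
  rho_c (mp_pinv A *m B) < 1.
Proof.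
set alpha := rho_c _; set beta := rho_c _ => sum_lt1.
have beta_ge0 : 0 <= beta by apply: rho_c_ge0.
have alpha_lt1 : alpha < 1 by lra.
rewrite mp_pinv_gram ?rho_c_near1_unitmx // -mulmxA.
apply: le_lt_trans (rho_cM _ _) _.
have := rho_c_invmx_le alpha_lt1; have := rho_c_ge0 (invmx (adjmx A *m A)).
rewrite -/alpha -/beta; nra.
Qed.

Section Coherence.
Variables (R : realType) (L M d : nat) (D : 'M[R[i]]_(L, M * d)).
Hypothesis unit_columns : forall j, \sum_i cnorm (D i j) ^+ 2 = 1.

(* For d = 0 every term of [block_coherence] is a division by [0%:R], hence [0]. *)
Lemma block_coherence_gt0_dim : 0 < block_coherence D -> (0 < d)%N.
Proof.
rewrite lt0n; apply: contraTneq => d0; rewrite -leNgt.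
have d0R : d%:R = 0 :> R by rewrite d0.
by apply: bigmax_le => // l _; apply: bigmax_le => // r _; rewrite d0R invr0 mulr0.
Qed.

Lemma sub_coherence_ge0 : 0 <= sub_coherence D.
Proof. exact: bigmax_ge_id. Qed.

Lemma block_coherence_ge0 : 0 <= block_coherence D.
Proof. exact: bigmax_ge_id. Qed.

Hypothesis d_gt0 : (0 < d)%N.

Lemma specnorm_block_gram_le l r : l != r ->
  specnorm (adjmx (colblock D l) *m colblock D r) <= d%:R * block_coherence D.
Proof.
move=> l_neq_r; rewrite -ler_pdivrMl ?ltr0n // mulrC.
apply: le_trans (le_bigmax _ _ l); rewrite eq_sym in l_neq_r.
exact: (le_bigmax_cond _ (P := fun r => r != l)
  (fun r => specnorm (adjmx (colblock D l) *m colblock D r) / d%:R) l_neq_r).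
Qed.

Lemma specnorm_block_gram_sub1_le l :
  specnorm (adjmx (colblock D l) *m colblock D l - 1%:M)
    <= (d%:R - 1) * sub_coherence D.
Proof.
apply: specnorm_zero_diag => // [|i|i j i_neq_j]; first exact: sub_coherence_ge0.
  rewrite !mxE eqxx /=; under eq_bigr do rewrite !mxE conjc_mul_self.
  by rewrite -raddf_sum unit_columns subrr.
rewrite !mxE (negbTE i_neq_j) subr0; under eq_bigr do rewrite !mxE.
apply: le_trans (le_bigmax _ _ l) ; apply: le_trans (le_bigmax _ _ i).
rewrite eq_sym in i_neq_j.
exact: (le_bigmax_cond _ (P := fun j => j != i) (fun j =>
  cnorm (\sum_t conjc (D t (mxvec_index l i)) * D t (mxvec_index l j))) i_neq_j).
Qed.

Lemma rho_c_gram_sub1_le (S : {set 'I_M}) : (0 < #|S|)%N ->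
  rho_c (adjmx (subblocks D S) *m subblocks D S - 1%:M)
    <= (d%:R - 1) * sub_coherence D + (#|S|%:R - 1) * (d%:R * block_coherence D).
Proof.
move=> S_gt0; apply: rho_c_le => [|r].
  by rewrite addr_ge0 ?mulr_ge0 ?subr_ge0 ?ler1n ?sub_coherence_ge0 ?block_coherence_ge0.
rewrite -(sum_if_eq r); apply: ler_sum => l _.
rewrite mblockD mblockN mblock1 mblock_adjmx_mul !colblock_subblocks.
have [->|l_neq_r] := eqVneq l r; first exact: specnorm_block_gram_sub1_le.
rewrite oppr0 addr0; apply: specnorm_block_gram_le.
by apply: contra_neq l_neq_r => /enum_val_inj.
Qed.

Lemma rho_c_cross_gram_le (S : {set 'I_M}) :
  rho_c (adjmx (subblocks D S) *m subblocks D (~: S))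
    <= #|S|%:R * (d%:R * block_coherence D).
Proof.
apply: rho_c_le => [|r]; first by rewrite !mulr_ge0 ?ler0n ?block_coherence_ge0.
apply: le_trans (_ : \sum_(l < #|S|) d%:R * block_coherence D <= _); last first.
  by rewrite sumr_const card_ord [leRHS]mulr_natl.
apply: ler_sum => l _; rewrite mblock_adjmx_mul !colblock_subblocks.
apply: specnorm_block_gram_le; apply/eqP => lr.
by have := enum_valP r; rewrite inE -lr enum_valP.
Qed.

End Coherence.

Lemma coherence_condition_lt1 (R : realFieldType) (mu nu : R) (k d : nat) :
  0 < mu -> (k * d)%:R < (mu^-1 + d%:R - (d%:R - 1) * (nu / mu)) / 2 ->
  (d%:R - 1) * nu + (k%:R - 1) * (d%:R * mu) + k%:R * (d%:R * mu) < 1.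
Proof.
move=> mu_gt0; rewrite natrM ltr_pdivlMr ?ltr0n // -(ltr_pM2r mu_gt0).
have -> : (mu^-1 + d%:R - (d%:R - 1) * (nu / mu)) * mu
    = 1 + d%:R * mu - (d%:R - 1) * nu by field; rewrite gt_eqF.
by move=> h; nra.
Qed.

Unset Implicit Arguments.
Local Close Scope complex_scope.

Theorem theorem3 (R : realType) (Rr M d k : nat)
  (D : 'M[R[i]]_(Rr * d, M * d)) :
  (forall j : 'I_(M * d), \sum_(i < Rr * d) cnorm (D i j) ^+ 2 = 1) ->
  (forall g : 'cV[R[i]]_(M * d),
      g != 0 -> (#|blk_support g| <= 2 * k)%N -> D *m g != 0) ->
  0 < block_coherence D ->
  (k * d)%:R < ((block_coherence D)^-1 + d%:R
                - (d%:R - 1) * (sub_coherence D / block_coherence D)) / 2 ->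
  forall Lambda0 : {set 'I_M}, #|Lambda0| = k ->
    rho_c (mp_pinv (subblocks D Lambda0) *m subblocks D (~: Lambda0)) < 1.
Proof.
move=> unit_columns _ mu_gt0 k_bound Lambda0 card_Lambda0.
apply: rho_c_pinv_mul_lt1.
have [k0|k_gt0] := posnP k.
  by rewrite !rho_c_empty ?card_Lambda0 // addr0 ltr01.
have d_gt0 := block_coherence_gt0_dim mu_gt0.
have Lambda0_gt0 : (0 < #|Lambda0|)%N by rewrite card_Lambda0.
apply: le_lt_trans (lerD (rho_c_gram_sub1_le unit_columns d_gt0 Lambda0_gt0)
  (rho_c_cross_gram_le D d_gt0 Lambda0)) _.
by rewrite card_Lambda0; apply: coherence_condition_lt1.
Qed.
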